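(* Let $V$ be a vector space over a field $k$ and let $\mathcal{P}_{k\mathrm{fin}}(V)$ be the set of finite-dimensional $k$-subspaces of $V$. Let $f:\mathcal{P}_{k\mathrm{fin}}(V)\to\mathbb{R}$ satisfy $f(W_1\cap W_2)+f(W_1+W_2)\leq f(W_1)+f(W_2)$ for all $W_1,W_2\in\mathcal{P}_{k\mathrm{fin}}(V)$, and assume that $m=\min_{W\in\mathcal{P}_{k\mathrm{fin}}(V),\,W\neq\{0\}}f(W)$ exists. If $W_1$ and $W_2$ are two atoms of $f$, then $W_1=W_2$ or $W_1\cap W_2=\{0\}$.
   Context: A fragment for $f$ is a nonzero finite-dimensional subspace $W$ with $f(W)=m$; an atom for $f$ is a fragment of minimal dimension among fragments. *)

From HB Require Import structures.
From mathcomp Require Import all_boot all_order all_algebra.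
From mathcomp Require Import reals.
Set Implicit Arguments. Unset Strict Implicit. Unset Printing Implicit Defensive.
Import Order.TTheory GRing.Theory Num.Theory.
Local Open Scope ring_scope.

(* A "subset" of a k-vector space V is a predicate on V. *)
Definition subsp (V : Type) := V -> Prop.

Section Defs.
Variables (k : fieldType) (V : lmodType k).

Definition span (s : seq V) : subsp V :=
  fun v => exists c : 'I_(size s) -> k, v = \sum_(i < size s) c i *: s`_i.

Definition spans (s : seq V) (W : subsp V) : Prop :=
  forall v, W v <-> span s v.

Definition fin_subspace (W : subsp V) : Prop := exists s, spans s W.

Definition has_dim (W : subsp V) (n : nat) : Prop :=
  (exists s, size s = n /\ spans s W) /\
  (forall s, spans s W -> (n <= size s)%N).

Definition zeroS : subsp V := fun v => v = 0.
Definition capS (W1 W2 : subsp V) : subsp V := fun v => W1 v /\ W2 v.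
Definition addS (W1 W2 : subsp V) : subsp V :=
  fun v => exists a b, W1 a /\ W2 b /\ v = a + b.

Definition nonzeroS (W : subsp V) : Prop := W <> zeroS.

Variables (R : realType) (f : subsp V -> R).

Definition is_min_value (m : R) : Prop :=
  (exists W, fin_subspace W /\ nonzeroS W /\ f W = m) /\
  (forall W, fin_subspace W -> nonzeroS W -> m <= f W).

Definition fragment (m : R) (W : subsp V) : Prop :=
  fin_subspace W /\ nonzeroS W /\ f W = m.

Definition atom (m : R) (W : subsp V) : Prop :=
  fragment m W /\
  exists n, has_dim W n /\
    forall W' n', fragment m W' -> has_dim W' n' -> (n <= n')%N.
End Defs.

From Pilot Require Import Defs.
From HB Require Import structures.
From mathcomp Require Import all_boot all_order all_algebra.
From mathcomp Require Import boolp reals.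
Set Implicit Arguments. Unset Strict Implicit. Unset Printing Implicit Defensive.
Import Order.TTheory GRing.Theory Num.Theory.
Local Open Scope ring_scope.

(* If U := W1 ∩ W2 is nonzero, submodularity gives
   f U + f (W1 + W2) <= 2 m while both terms are >= m, so U is a fragment.
   As dim U <= dim W1 and W1 is an atom, dim U = dim W1, so U = W1; likewise
   U = W2.  The only linear algebra needed is that a subspace of a space
   spanned by n vectors is spanned by at most n vectors, and by fewer than n
   unless it is the whole space; it is obtained from the rank theory of
   matrices by working in coordinates. *)

Lemma subsp_ext (V : Type) (P Q : subsp V) : (forall v, P v <-> Q v) -> P = Q.
Proof. by move=> PQ; apply: funext => v; apply: propext. Qed.

Section Subspaces.
Variables (k : fieldType) (V : lmodType k).

Definition is_subspace (P : subsp V) : Prop :=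
  [/\ P 0, forall a b, P a -> P b -> P (a + b) & forall (x : k) a, P a -> P (x *: a)].

Lemma span_subspace (s : seq V) : is_subspace (Defs.span s).
Proof.
split.
- by exists (fun _ => 0); rewrite big1 // => i _; rewrite scale0r.
- move=> a b [c1 ->] [c2 ->]; exists (fun i => c1 i + c2 i).
  by rewrite -big_split /=; apply: eq_bigr => i _; rewrite scalerDl.
- move=> x a [c ->]; exists (fun i => x * c i).
  by rewrite scaler_sumr; apply: eq_bigr => i _; rewrite scalerA.
Qed.

Lemma spans_subspace (s : seq V) (W : subsp V) : spans s W -> is_subspace W.
Proof.
move=> sW; have [S0 SD SZ] := span_subspace s.
split; first exact/sW.
- by move=> a b /sW Sa /sW Sb; apply/sW; apply: SD.
- by move=> x a /sW Sa; apply/sW; apply: SZ.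
Qed.

Lemma capS_subspace (P Q : subsp V) :
  is_subspace P -> is_subspace Q -> is_subspace (capS P Q).
Proof.
move=> [P0 PD PZ] [Q0 QD QZ]; split=> //.
- by move=> a b [Pa Qa] [Pb Qb]; split; [apply: PD | apply: QD].
- by move=> x a [Pa Qa]; split; [apply: PZ | apply: QZ].
Qed.

Lemma span_subset (s : seq V) (P : subsp V) :
  is_subspace P -> (forall i, (i < size s)%N -> P s`_i) ->
  forall v, Defs.span s v -> P v.
Proof.
move=> [P0 PD PZ] Ps v [c ->].
by apply: big_ind => // i _; apply: PZ; apply: Ps.
Qed.

Lemma span_cat (s1 s2 : seq V) v :
  Defs.span (s1 ++ s2) v <-> addS (Defs.span s1) (Defs.span s2) v.
Proof.
have nth_lshift (i : 'I_(size s1)) : (s1 ++ s2)`_(lshift (size s2) i) = s1`_i.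
  by rewrite nth_cat /= ltn_ord.
have nth_rshift (i : 'I_(size s2)) : (s1 ++ s2)`_(rshift (size s1) i) = s2`_i.
  by rewrite nth_cat /= ltnNge leq_addr /= addKn.
rewrite /Defs.span; move: (size (s1 ++ s2)) (size_cat s1 s2) => _ ->; split.
- move=> [c ->]; rewrite big_split_ord /=.
  do 2!eexists; split; last split; last reflexivity.
  + by exists (fun i => c (lshift _ i)); apply: eq_bigr => i _; rewrite nth_lshift.
  + by exists (fun i => c (rshift _ i)); apply: eq_bigr => i _; rewrite nth_rshift.
- move=> [_ [_ [[c1 ->] [[c2 ->] ->]]]].
  exists (fun i => match fintype.split i with inl j => c1 j | inr j => c2 j end).
  rewrite big_split_ord /=; congr (_ + _); apply: eq_bigr => i _.
  + by rewrite -[lshift _ _]/(unsplit (inl i)) unsplitK nth_lshift.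
  + by rewrite -[rshift _ _]/(unsplit (inr i)) unsplitK nth_rshift.
Qed.

End Subspaces.

Lemma subspace_rowspace (k : fieldType) (N : nat) (U : subsp 'rV[k]_N) :
  is_subspace U -> exists B : 'M[k]_N, forall u, U u <-> (u <= B)%MS.
Proof.
move=> [U0 UD UZ].
suff grow d (A : 'M[k]_N) : (forall v, (v <= A)%MS -> U v) ->
    (N <= \rank A + d)%N -> exists B : 'M[k]_N, forall u, U u <-> (u <= B)%MS.
  by apply: (grow N 0) => [v|]; [rewrite submx0 => /eqP -> | rewrite mxrank0].
elim: d A => [|d IH] A AU rkA.
  exists A => u; split=> [_|]; last exact: AU.
  by apply: submx_full; rewrite /row_full eqn_leq rank_leq_col -(addn0 (\rank A)).
have [UA | /existsNP [u /not_implyP [Uu uNA]]] :=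
  pselect (forall u, U u -> (u <= A)%MS).
  by exists A => u; split; [apply: UA | apply: AU].
apply: (IH (A + u)%MS).
  move=> v /sub_addsmxP [[x y] /= ->]; apply: UD; first exact/AU/submxMl.
  have /sub_rVP [a ->] : (y *m u <= u)%MS by apply: submxMl.
  exact: UZ.
have /rank_ltmx rk_lt : (A < A + u)%MS.
  rewrite ltmxE addsmxSl; apply: contra_notN uNA.
  exact: submx_trans (addsmxSr A u).
by apply: leq_trans rkA _; rewrite addnS -addSn leq_add2r.
Qed.

Section SpanDimension.
Variables (k : fieldType) (V : lmodType k).

Definition lincomb (t : seq V) (c : 'rV[k]_(size t)) : V :=
  \sum_(i < size t) c 0 i *: t`_i.

Lemma lincomb_mulmx (t : seq V) r (x : 'rV[k]_r) (M : 'M[k]_(r, size t)) :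
  lincomb (x *m M) = \sum_(j < r) x 0 j *: lincomb (row j M).
Proof.
rewrite /lincomb; under eq_bigr => i _ do rewrite mxE scaler_suml.
rewrite exchange_big /=; apply: eq_bigr => j _; rewrite scaler_sumr.
by apply: eq_bigr => i _; rewrite mxE scalerA.
Qed.

Lemma span_lincomb (t : seq V) v :
  Defs.span t v -> exists c : 'rV[k]_(size t), v = lincomb c.
Proof. by move=> [d ->]; exists (\row_i d i); apply: eq_bigr => i _; rewrite mxE. Qed.

(* The coordinate vectors of the elements of P form a subspace of
   'rV_(size t); the images of the rows of a row basis of it span P. *)
Lemma subspace_of_span_spans (t : seq V) (P : subsp V) :
  is_subspace P -> (forall v, P v -> Defs.span t v) ->
  exists s : seq V, [/\ spans s P, (size s <= size t)%N &
    (size s = size t -> forall v, Defs.span t v -> P v)].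
Proof.
move=> Psub Pt; have [P0 PD PZ] := Psub.
pose U : subsp 'rV[k]_(size t) := fun c => P (lincomb c).
have Usub : is_subspace U.
  split.
  - by rewrite /U /lincomb big1 // => i _; rewrite mxE scale0r.
  - move=> a b Ua Ub; rewrite /U /lincomb.
    by under eq_bigr => i _ do rewrite mxE scalerDl; rewrite big_split; apply: PD.
  - move=> x a Ua; rewrite /U /lincomb.
    by under eq_bigr => i _ do rewrite mxE -scalerA; rewrite -scaler_sumr; apply: PZ.
have [B UB] := subspace_rowspace Usub.
pose s := [seq lincomb (row i (row_base B)) | i <- enum 'I_(\rank B)].
have size_s : size s = \rank B by rewrite size_map size_enum_ord.
have nth_s (i : 'I_(\rank B)) : s`_i = lincomb (row i (row_base B)).
  by rewrite (nth_map i) ?size_enum_ord // nth_ord_enum.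
exists s; split=> [v||full_s v /span_lincomb [c ->]]; last 2 first.
- by rewrite size_s rank_leq_col.
- by apply/UB/submx_full; rewrite /row_full -size_s full_s.
split=> [Pv | ]; last first.
  apply: span_subset => // i; rewrite size_s => ilt; rewrite (nth_s (Ordinal ilt)).
  by apply/UB; rewrite -(eq_row_base B) row_sub.
have [c vc] := span_lincomb (Pt v Pv); subst v.
have /submxP [x ->] : (c <= row_base B)%MS by rewrite eq_row_base; apply/UB.
rewrite lincomb_mulmx /Defs.span size_s; exists (fun j => x 0 j).
by apply: eq_bigr => j _; rewrite nth_s.
Qed.

Lemma has_dim_exists (W : subsp V) : fin_subspace W -> exists n, has_dim W n.
Proof.
move=> [s sW].
have ex_size : exists n, `[< exists s, size s = n /\ spans s W >].
  by exists (size s); apply/asboolP; exists s.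
case: (ex_minnP ex_size) => n /asboolP Wn n_min; exists n; split=> // t tW.
by apply: n_min; apply/asboolP; exists t.
Qed.

Lemma subspace_eq_of_dim_le (W P : subsp V) (t : seq V) n :
  spans t W -> is_subspace P -> (forall v, P v -> W v) ->
  has_dim P n -> (size t <= n)%N -> P = W.
Proof.
move=> tW Psub PW [_ Pmin] tn; apply: subsp_ext => v; split; first exact: PW.
have [s [sP st full]] := subspace_of_span_spans Psub (fun v Pv => proj1 (tW v) (PW v Pv)).
have st_eq : size s = size t by apply/eqP; rewrite eqn_leq st (leq_trans tn) ?Pmin.
by move=> /tW; apply: full.
Qed.

End SpanDimension.

Section Atoms.
Variables (k : fieldType) (V : lmodType k) (R : realType) (f : subsp V -> R).
Hypothesis f_submod : forall W1 W2 : subsp V, fin_subspace W1 -> fin_subspace W2 ->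
  f (capS W1 W2) + f (addS W1 W2) <= f W1 + f W2.
Variables (m : R) (m_min : is_min_value f m).

Lemma fragment_capS (W1 W2 : subsp V) :
  fragment f m W1 -> fragment f m W2 -> nonzeroS (capS W1 W2) ->
  fragment f m (capS W1 W2).
Proof.
move=> [[t1 t1W] [W1nz fW1]] [[t2 t2W] [_ fW2]] capnz.
have [W10 _ _] := spans_subspace t1W; have [W20 _ _] := spans_subspace t2W.
have [s [sW _ _]] := subspace_of_span_spans
  (capS_subspace (spans_subspace t1W) (spans_subspace t2W))
  (fun v Wv => proj1 (t1W v) (proj1 Wv)).
have cap_fin : fin_subspace (capS W1 W2) by exists s.
have add_fin : fin_subspace (addS W1 W2).
  exists (t1 ++ t2) => v; rewrite span_cat.
  by split=> -[a [b [Wa [Wb ->]]]]; exists a, b; do !split; by [apply/t1W | apply/t2W].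
have add_nz : nonzeroS (addS W1 W2).
  move=> add0; apply: W1nz; apply: subsp_ext => v; split=> [W1v | -> //].
  by rewrite -add0; exists v, 0; rewrite addr0.
have cap_ge := m_min.2 _ cap_fin capnz; have add_ge := m_min.2 _ add_fin add_nz.
have := f_submod (ex_intro _ t1 t1W) (ex_intro _ t2 t2W); rewrite fW1 fW2 => sub.
split; [exact: cap_fin | split=> //]; apply/eqP; rewrite eq_le cap_ge andbT.
by rewrite -(lerD2r (f (addS W1 W2))) (le_trans sub) ?lerD2l.
Qed.

Lemma atom_eq_sub_fragment (W U : subsp V) :
  atom f m W -> fragment f m U -> (forall v, U v -> W v) -> U = W.
Proof.
move=> [_ [n [[[s [sn sW]] _] n_min]]] Ufrag UW.
have [[u uU] _] := Ufrag; have [d Ud] := has_dim_exists (ex_intro _ u uU).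
apply: (subspace_eq_of_dim_le sW (spans_subspace uU) UW Ud).
by rewrite sn (n_min _ _ Ufrag Ud).
Qed.

End Atoms.

Theorem mainTheorem17 (k : fieldType) (V : lmodType k) (R : realType)
  (f : subsp V -> R)
  (hsub : forall W1 W2 : subsp V, fin_subspace W1 -> fin_subspace W2 ->
     f (capS W1 W2) + f (addS W1 W2) <= f W1 + f W2)
  (m : R) (hm : is_min_value f m)
  (W1 W2 : subsp V) (h1 : atom f m W1) (h2 : atom f m W2) :
  W1 = W2 \/ capS W1 W2 = zeroS (V:=V).
Proof.
have [cap0 | capnz] := pselect (capS W1 W2 = zeroS (V:=V)); first by right.
have cap_frag := fragment_capS hsub hm h1.1 h2.1 capnz.
have cap_W1 := atom_eq_sub_fragment h1 cap_frag (fun v Wv => Wv.1).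
have cap_W2 := atom_eq_sub_fragment h2 cap_frag (fun v Wv => Wv.2).
by left; rewrite -cap_W1 cap_W2.
Qed.
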